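(* Let $\varphi$ be an Orlicz $N$-function with Young–Fenchel transform $\psi$. Let $\{X_{k,n},k\ge1,n\ge1\}$ be a double array of $\varphi$-subgaussian random variables, let $g$ be a positive non-decreasing function, set $a_{m,j}=g(\ln(mj))\psi^{-1}(\ln(mj))$, $Y_{m,j}=\max_{1\le k\le m,1\le n\le j}X_{k,n}-a_{m,j}$ and $Y^+_{m,j}=\max(Y_{m,j},0)$. Let $\alpha\in\mathbb R$. Suppose there is a positive-valued function $f$ such that for all $m,j\ge1$, $1\le k\le m$, $1\le n\le j$, $$\frac{g(\ln(mj))}{\tau_\varphi(X_{k,n})}\ge f\left(\frac{mj}{kn}\right)\ge1,$$ and $$\sum_{m=1}^\infty\sum_{j=1}^\infty\sum_{k=1}^m\sum_{n=1}^j(mj)^{-\alpha-f\left(\frac{mj}{kn}\right)}<+\infty.$$ Then $$\sum_{m=1}^\infty\sum_{j=1}^\infty(mj)^{-\alpha}P(Y^+_{m,j}>0)<+\infty.$$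
   Context: An Orlicz $N$-function is a continuous even convex function $\varphi:\mathbb R\to\mathbb R$ with $\varphi(0)=0$, increasing on $(0,\infty)$, with $\varphi(x)/x\to0$ as $x\to0$ and $\varphi(x)/x\to+\infty$ as $x\to+\infty$. The Young–Fenchel transform is $\psi(x)=\sup_{y\in\mathbb R}(xy-\varphi(y))$ (itself an Orlicz $N$-function); $\psi^{-1}$ is the inverse of $\psi$ on $[0,\infty)$. A random variable $X$ is $\varphi$-subgaussian if $EX=0$ and there is a finite $a>0$ with $E\exp(tX)\le\exp(\varphi(at))$ for all $t$; $\tau_\varphi(X)=\inf\{a>0:E\exp(tX)\le\exp(\varphi(at))\ \forall t\}$. *)

From HB Require Import structures.
From mathcomp Require Import all_boot all_order all_algebra.
From mathcomp Require Import all_classical all_reals all_analysis.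
Set Implicit Arguments. Unset Strict Implicit. Unset Printing Implicit Defensive.
Import Order.TTheory GRing.Theory Num.Theory.
Import numFieldNormedType.Exports.
Local Open Scope classical_set_scope.
Local Open Scope ring_scope.

Definition N_function (R : realType) (phi : R -> R) : Prop :=
  continuous phi /\
  (forall x, phi (- x) = phi x) /\
  (forall x y (l : R), 0 <= l <= 1 ->
     phi (l * x + (1 - l) * y) <= l * phi x + (1 - l) * phi y) /\
  phi 0 = 0 /\
  (forall x y, 0 < x -> x < y -> phi x < phi y) /\
  (fun x => phi x / x) @ 0^' --> 0 /\
  (fun x => phi x / x) @ +oo --> +oo.

Definition young_fenchel (R : realType) (phi : R -> R) (x : R) : R :=
  sup [set x * y - phi y | y in [set: R]].

(* inverse of psi on [0,oo): psi is a continuous increasing bijection of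
   [0,oo) onto itself, so psi^{-1}(x) = sup {y >= 0 | psi y <= x}. *)
Definition young_fenchel_inv (R : realType) (phi : R -> R) (x : R) : R :=
  sup [set y | 0 <= y /\ young_fenchel phi y <= x].

Definition mgf_bound (R : realType) d (T : measurableType d)
  (P : probability T R) (phi : R -> R) (X : T -> R) (a : R) : Prop :=
  forall t : R, (\int[P]_w (expR (t * X w))%:E <= (expR (phi (a * t)))%:E)%E.

Definition phi_subgaussian (R : realType) d (T : measurableType d)
  (P : probability T R) (phi : R -> R) (X : {RV P >-> R}) : Prop :=
  P.-integrable setT (EFin \o X) /\ ('E_P[X] = 0)%E /\
  exists a : R, 0 < a /\ mgf_bound P phi X a.

Definition tau_phi (R : realType) d (T : measurableType d)
  (P : probability T R) (phi : R -> R) (X : T -> R) : R :=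
  inf [set a : R | 0 < a /\ mgf_bound P phi X a].

Definition max_array (R : realType) (T : Type) (X : nat -> nat -> T -> R)
  (m j : nat) (w : T) : R :=
  \big[Num.max/X 1%N 1%N w]_(1 <= k < m.+1)
     \big[Num.max/X 1%N 1%N w]_(1 <= n < j.+1) X k n w.

Arguments mgf_bound {R d T} P phi X a.
Arguments phi_subgaussian {R d T} P phi X.
Arguments tau_phi {R d T} P phi X.

(* Chernoff's bound gives [P (X > x) <= exp (- psi (x / tau_phi X))] for x >= 0.
   Put [L = ln (m j)], [u = psi^-1 (L)] and [c = g (L) / tau_phi (X k n)], so that
   [c >= f (m j / (k n)) >= 1] and [a m j / tau_phi (X k n) = c u].  Since [phi >= 0],
   [psi (c u) >= c psi (u) >= c L], hence [P (X k n > a m j) <= (m j)^(- f (m j / (k n)))].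
   A union bound over [k <= m], [n <= j] then dominates [(m j)^(- alpha) P (Y m j > 0)]
   by the [(m, j)] term of the convergent series of the hypothesis. *)

From HB Require Import structures.
From mathcomp Require Import all_boot all_order all_algebra.
From mathcomp Require Import all_classical all_reals all_analysis.
From mathcomp Require Import ring lra.
Set Implicit Arguments. Unset Strict Implicit. Unset Printing Implicit Defensive.
Import Order.TTheory GRing.Theory Num.Theory.
Import numFieldNormedType.Exports.
Local Open Scope classical_set_scope.
Local Open Scope ring_scope.

Section young_fenchel.
Variables (R : realType) (phi : R -> R).
Hypothesis phiN : N_function phi.
Local Notation psi := (young_fenchel phi).

Lemma N_function_norm x : phi `|x| = phi x.
Proof. by case: phiN => _ [phiN' _]; case: (ger0P x) => // _; rewrite phiN'. Qed.

Lemma N_function_ge0 x : 0 <= phi x.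
Proof.
case: phiN => _ [phiN' [phi_convex [phi0 _]]].
have half01 : 0 <= (2^-1 : R) <= 1 by apply/andP; split; lra.
have := phi_convex x (- x) _ half01.
rewrite (_ : 2^-1 * x + (1 - 2^-1) * - x = 0); last by field.
by rewrite phi0 phiN' => ?; lra.
Qed.

Lemma N_function_superlinear M :
  exists2 S, 0 < S & forall s, S <= `|s| -> M * `|s| <= phi s.
Proof.
case: phiN => _ [_ [_ [_ [_ [_ phi_infty]]]]].
have [S0 [_ HS0]] := proj1 (cvgryPge _) phi_infty M.
exists (Num.max (S0 + 1) 1) => [|s]; first by rewrite lt_max ltr01 orbT.
rewrite ge_max => /andP[S0s s1].
have s0 : 0 < `|s| by apply: lt_le_trans s1.
by rewrite -N_function_norm -ler_pdivlMr //; apply: HS0; lra.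
Qed.

Lemma has_sup_young_fenchel x : has_sup [set x * y - phi y | y in [set: R]].
Proof.
split; first by exists (x * 0 - phi 0), 0.
have [S S0 HS] := N_function_superlinear (`|x| + 1).
exists (`|x| * S) => _ [y _ <-].
have xy : x * y <= `|x| * `|y| by rewrite -normrM ler_norm.
have := N_function_ge0 y; have : 0 <= `|x| by [].
case: (leP S `|y|) => [/HS|/ltW]; nra.
Qed.

Lemma young_fenchel_ge x y : x * y - phi y <= psi x.
Proof. by apply: sup_upper_bound; [exact: has_sup_young_fenchel | exists y]. Qed.

Lemma young_fenchel_le x b : (forall y, x * y - phi y <= b) -> psi x <= b.
Proof.
move=> xb; apply: ge_sup; first by exists (x * 0 - phi 0), 0.
by move=> _ [y _ <-].
Qed.

Lemma young_fenchel_convex x y l : 0 <= l <= 1 ->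
  psi (l * x + (1 - l) * y) <= l * psi x + (1 - l) * psi y.
Proof.
move=> /andP[l0 l1]; apply: young_fenchel_le => s.
have := young_fenchel_ge x s; have := young_fenchel_ge y s; nra.
Qed.

Lemma young_fenchel_scale c u : 1 <= c -> c * psi u <= psi (c * u).
Proof.
move=> c1; rewrite mulrC -ler_pdivlMr; last lra.
apply: young_fenchel_le => y; rewrite ler_pdivlMr; last lra.
have := young_fenchel_ge (c * u) y; have := N_function_ge0 y; nra.
Qed.

Section inverse.
Variable L : R.
Hypothesis L0 : 0 <= L.
Let E := [set y | 0 <= y /\ psi y <= L].

Let hsE : has_sup E.
Proof.
split.
  exists 0; split => //; apply: le_trans L0; apply: young_fenchel_le => y.
  by rewrite mul0r sub0r oppr_le0 N_function_ge0.
exists (L + phi 1) => y [_ yL].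
by have := young_fenchel_ge y 1; rewrite mulr1; lra.
Qed.

Lemma young_fenchel_inv_ge0 : 0 <= young_fenchel_inv phi L.
Proof. by have [[y Ey] _] := hsE; apply: le_trans (sup_upper_bound hsE Ey); case: Ey. Qed.

(* With [u] the supremum, [psi (u + d) > L] for every [d > 0]; convexity of
   [psi] on [[u, u + 1]] turns this into [psi u >= L]. *)
Lemma young_fenchel_invK_ge : L <= psi (young_fenchel_inv phi L).
Proof.
have u0 := young_fenchel_inv_ge0.
rewrite /young_fenchel_inv -/E in u0 *; set u := sup E in u0 *.
set D := psi (u + 1) - psi u.
have above d : 0 < d <= 1 -> L < psi u + d * D.
  case/andP=> d0 d1.
  have Lud : L < psi (u + d).
    rewrite ltNge; apply/negP => udL.
    have : E (u + d) by split => //; lra.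
    by move/(sup_upper_bound hsE); rewrite -/u; lra.
  have : 0 <= 1 - d <= 1 by apply/andP; split; lra.
  move/(young_fenchel_convex u (u + 1)).
  rewrite (_ : (1 - d) * u + (1 - (1 - d)) * (u + 1) = u + d); last by ring.
  by rewrite /D; lra.
rewrite leNgt; apply/negP => uL.
have D_gt : L - psi u < D by have := above 1; rewrite ltr01 lexx mul1r; lra.
have d01 : 0 < (L - psi u) / D <= 1.
  by rewrite divr_gt0 ?ler_pdivrMr /=; lra.
by have := above _ d01; rewrite divfK ?gt_eqF //; lra.
Qed.

End inverse.
End young_fenchel.

Lemma div_inf_le (R : realType) (E : set R) (c b : R) :
  0 <= c -> 0 < inf E -> E !=set0 -> (forall a, E a -> 0 < a) ->
  (forall a, E a -> c / a <= b) -> c / inf E <= b.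
Proof.
move=> c0 infE0 [a0 Ea0] E_gt0 cEb.
have b0 : 0 <= b by apply: le_trans (cEb _ Ea0); rewrite divr_ge0 // ltW // E_gt0.
have [->|c_gt0] := eqVneq c 0; first by rewrite mul0r.
have {}c_gt0 : 0 < c by rewrite lt_neqAle eq_sym c_gt0.
have b_gt0 : 0 < b by apply: lt_le_trans (cEb _ Ea0); rewrite divr_gt0 // E_gt0.
have cb_inf : c / b <= inf E.
  apply: lb_le_inf => [|a Ea]; first by exists a0.
  by rewrite ler_pdivrMr // mulrC -ler_pdivrMr ?E_gt0 ?cEb.
by rewrite ler_pdivrMr // mulrC -ler_pdivrMr.
Qed.

Section tail.
Variables (R : realType) (d : measure_display) (T : measurableType d).
Variable P : probability T R.

Lemma measurable_RV_gt (X : {RV P >-> R}) c : measurable [set w | c < X w].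
Proof.
rewrite (_ : [set w | c < X w] = X @^-1` `]c, +oo[); first exact: measurable_funPTI.
by apply/seteqP; split => w /=; rewrite in_itv /= andbT.
Qed.

Lemma measurable_RV_ge (X : {RV P >-> R}) c : measurable [set w | c <= X w].
Proof.
rewrite (_ : [set w | c <= X w] = X @^-1` `[c, +oo[); first exact: measurable_funPTI.
by apply/seteqP; split => w /=; rewrite in_itv /= andbT.
Qed.

Lemma mgf_bound_phi0 phi (X : {RV P >-> R}) a : mgf_bound P phi X a -> 0 <= phi 0.
Proof.
move=> /(_ 0); under eq_integral do rewrite mul0r expR0.
rewrite integral_cst // -[X in (_ * X)%E]/(P setT) probability_setT mule1.
by rewrite lee_fin mulr0 -expR0 ler_expR.
Qed.

Lemma mgf_bound_tail phi (X : {RV P >-> R}) a x s : 0 < a -> mgf_bound P phi X a ->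
  0 <= s -> (P [set w | (x < X w)%R] <= (expR (phi s - s * x / a))%:E)%E.
Proof.
move=> a0 Xa; rewrite le_eqVlt => /predU1P[<-|s0].
  apply: le_trans (probability_le1 P (measurable_RV_gt X x)) _.
  by rewrite lee_fin mul0r mul0r subr0 -expR0 ler_expR (mgf_bound_phi0 Xa).
apply: (@le_trans _ _ (P [set w | x <= X w])).
  apply: le_measure; rewrite ?inE; [exact: measurable_RV_gt | exact: measurable_RV_ge |].
  by move=> w /= /ltW.
have sa0 : 0 < s / a by rewrite divr_gt0.
apply: le_trans (chernoff _ _ sa0) _.
rewrite (_ : 'M_P X (s / a) = \int[P]_w (expR (s / a * X w))%:E)%E; last first.
  by rewrite /mmt_gen_fun unlock; apply: eq_integral => w _ /=; rewrite mulrC.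
apply: le_trans (lee_wpmul2r _ (Xa (s / a))) _; first by rewrite lee_fin expR_ge0.
by rewrite -EFinM lee_fin -expRD mulrCA divff ?gt_eqF // mulr1 mulrAC.
Qed.

(* [tau_phi X] itself need not satisfy the mgf bound; it suffices to bound each
   affine minorant [y |-> x y / tau - phi y] of [psi], and [x y / tau] is the
   supremum of [x y / a] over the admissible constants [a] ([div_inf_le]). *)
Lemma tau_phi_tail phi (X : {RV P >-> R}) x : N_function phi -> 0 <= x ->
  0 < tau_phi P phi X -> (exists a, 0 < a /\ mgf_bound P phi X a) ->
  (P [set w | (x < X w)%R] <= (expR (- young_fenchel phi (x / tau_phi P phi X)))%:E)%E.
Proof.
move=> phiN x0 tau0 [a0 Ea0].
have mA := measurable_RV_gt X x.
have PA_fin : P [set w | x < X w] \is a fin_num by rewrite fin_num_measure.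
rewrite -(fineK PA_fin) lee_fin; set p := fine _.
have p0 : 0 <= p by rewrite fine_ge0 // measure_ge0.
have p1 : p <= 1 by rewrite -lee_fin fineK // probability_le1.
have [->|p_gt0] := eqVneq p 0; first exact: expR_ge0.
have {}p_gt0 : 0 < p by rewrite lt_neqAle eq_sym p_gt0.
rewrite -ler_ln ?posrE ?expR_gt0 // expRK lerNr.
apply: young_fenchel_le => y.
apply: (@le_trans _ _ (x * `|y| / tau_phi P phi X - phi `|y|)).
  rewrite (N_function_norm phiN) lerD2r mulrAC.
  by apply: ler_wpM2r; [rewrite invr_ge0 ltW | exact: ler_wpM2l (ler_norm y)].
rewrite lerBlDr; apply: div_inf_le => [|//||a []//|a [a_gt0 Xa]].
- by rewrite mulr_ge0.
- by exists a0.
have lnp : ln p <= phi `|y| - `|y| * x / a.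
  rewrite -[leRHS]expRK ler_ln ?posrE ?expR_gt0 // -lee_fin /p fineK //.
  exact: mgf_bound_tail.
rewrite (mulrC x); lra.
Qed.

(* [tau_phi X > 0] is not assumed: it follows from [F <= b / tau_phi X] because
   [b / 0 = 0 < 1 <= F]. *)
Lemma phi_subgaussian_tail phi (X : {RV P >-> R}) L b F :
  N_function phi -> phi_subgaussian P phi X -> 0 <= L ->
  1 <= F -> F <= b / tau_phi P phi X ->
  (P [set w | (b * young_fenchel_inv phi L < X w)%R] <= (expR (- (F * L)))%:E)%E.
Proof.
move=> phiN [_ [_ [a0 Ea0]]] L0 F1 Fb.
set tau := tau_phi P phi X in Fb *.
have tau_gt0 : 0 < tau.
  have tau0 : 0 <= tau by apply: lb_le_inf; [exists a0 | move=> a [/ltW]].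
  rewrite lt_neqAle tau0 andbT; apply: contraTneq Fb => <-.
  by rewrite invr0 mulr0 -ltNge (lt_le_trans ltr01).
have c1 : 1 <= b / tau := le_trans F1 Fb.
have u0 := young_fenchel_inv_ge0 phiN L0.
have x0 : 0 <= b * young_fenchel_inv phi L.
  by rewrite mulr_ge0 // -(divfK (lt0r_neq0 tau_gt0) b) mulr_ge0 ?(le_trans ler01 c1) ?ltW.
apply: le_trans (tau_phi_tail phiN x0 tau_gt0 (ex_intro _ a0 Ea0)) _.
rewrite lee_fin ler_expR lerN2 -/tau mulrAC.
apply: le_trans (young_fenchel_scale phiN _ c1).
have := young_fenchel_invK_ge phiN L0; have := le_trans ler01 c1; nra.
Qed.

End tail.

Lemma measure_bigsetU_le d (T : ringOfSetsType d) (R : realFieldType)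
  (mu : {content set T -> \bar R}) (I : Type) (r : seq I) (F : I -> set T) :
  (forall i, measurable (F i)) ->
  (mu (\big[setU/set0]_(i <- r) F i) <= \sum_(i <- r) mu (F i))%E.
Proof.
move=> mF; elim: r => [|i r IH]; first by rewrite !big_nil measure0.
rewrite !big_cons; apply: le_trans (measureU2 _ (mF i) _) _.
  exact: bigsetU_measurable.
exact: leeD.
Qed.

Section max_array.
Variables (R : realType) (T : Type) (X : nat -> nat -> T -> R) (m j : nat).
Hypotheses (m_gt0 : (0 < m)%N) (j_gt0 : (0 < j)%N).

Lemma max_array_le w c :
  (forall k n, (1 <= k <= m)%N -> (1 <= n <= j)%N -> X k n w <= c) ->
  max_array X m j w <= c.
Proof.
move=> Xc; have X11 : X 1 1 w <= c by apply: Xc; apply/andP.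
rewrite /max_array big_nat_cond; apply: bigmax_le => // k /andP[/andP[k1 km] _].
rewrite big_nat_cond; apply: bigmax_le => // n /andP[/andP[n1 nj] _].
by apply: Xc; apply/andP; split.
Qed.

Lemma max_array_gtE c :
  [set w | c < max_array X m j w] =
  \big[setU/set0]_(k <- index_iota 1 m.+1) \big[setU/set0]_(n <- index_iota 1 j.+1)
    [set w | c < X k n w].
Proof.
apply/seteqP; split => w /=.
  move=> cw; apply: contrapT => notin; move: cw; apply/negP; rewrite -leNgt.
  apply: max_array_le => k n km nj; rewrite leNgt; apply/negP => ckn; apply: notin.
  rewrite -bigcup_seq; exists k; first by rewrite /= mem_index_iota ltnS.
  by rewrite -bigcup_seq; exists n; first by rewrite /= mem_index_iota ltnS.
rewrite -bigcup_seq => -[k /= kr]; rewrite -bigcup_seq => -[n /= nr ckn].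
apply: (lt_le_trans ckn); apply: le_trans (le_bigmax_seq _ _ _ _ kr isT).
exact: le_bigmax_seq _ _ _ _ nr isT.
Qed.

End max_array.

Lemma max_array_tail_le (R : realType) d (T : measurableType d) (P : probability T R)
  (X : nat -> nat -> {RV P >-> R}) m j c : (0 < m)%N -> (0 < j)%N ->
  (P [set w | (c < max_array (fun k n => X k n : T -> R) m j w)%R] <=
   \sum_(1 <= k < m.+1) \sum_(1 <= n < j.+1) P [set w | (c < X k n w)%R])%E.
Proof.
move=> m0 j0; rewrite max_array_gtE //.
have mXk k : measurable (\big[setU/set0]_(n <- index_iota 1 j.+1) [set w | c < X k n w]).
  by apply: bigsetU_measurable => n _; exact: measurable_RV_gt.
apply: le_trans (measure_bigsetU_le _ _ mXk) _.
apply: lee_sum => k _; apply: measure_bigsetU_le => n; exact: measurable_RV_gt.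
Qed.

Section theorem4.
Variables (R : realType) (d : measure_display) (T : measurableType d).
Variables (P : probability T R) (phi : R -> R) (X : nat -> nat -> {RV P >-> R}).
Variables (g f : R -> R) (alpha : R).
Hypothesis phiN : N_function phi.
Hypothesis X_subgaussian :
  forall k n, (1 <= k)%N -> (1 <= n)%N -> phi_subgaussian P phi (X k n).
Hypothesis gf : forall m j k n, (1 <= k <= m)%N -> (1 <= n <= j)%N ->
  g (ln (m * j)%:R) / tau_phi P phi (X k n) >= f ((m * j)%:R / (k * n)%:R)
  /\ f ((m * j)%:R / (k * n)%:R) >= 1.

Let level m j := g (ln (m * j)%:R) * young_fenchel_inv phi (ln (m * j)%:R).

Lemma entry_tail_le m j k n : (1 <= k <= m)%N -> (1 <= n <= j)%N ->
  (P [set w | (level m j < X k n w)%R] <=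
   ((m * j)%:R `^ (- f ((m * j)%:R / (k * n)%:R)))%:E)%E.
Proof.
move=> km nj; have [fg f1] := gf km nj.
case/andP: km => k1 km; case/andP: nj => n1 nj.
have mj1 : 1 <= (m * j)%:R :> R.
  by rewrite ler1n muln_gt0 (leq_trans k1 km) (leq_trans n1 nj).
have Xkn := X_subgaussian k1 n1.
apply: le_trans (phi_subgaussian_tail phiN Xkn (ln_ge0 mj1) f1 fg) _.
by rewrite /powR gt_eqF ?mulNr // (lt_le_trans ltr01).
Qed.

Lemma max_array_term_le m j : (0 < m)%N -> (0 < j)%N ->
  (((m * j)%:R `^ (- alpha))%:E *
     P [set w | (0 < Num.max (max_array (fun k n => X k n : T -> R) m j w - level m j) 0)%R] <=
   \sum_(1 <= k < m.+1) \sum_(1 <= n < j.+1)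
     ((m * j)%:R `^ (- alpha - f ((m * j)%:R / (k * n)%:R)))%:E)%E.
Proof.
move=> m0 j0.
have c0 : (0 <= ((m * j)%:R `^ (- alpha))%:E :> \bar R)%E by rewrite lee_fin powR_ge0.
rewrite (_ : [set w | _] = [set w | level m j < max_array (fun k n => X k n : T -> R) m j w]);
  last by apply/seteqP; split => w; rewrite /= lt_max ltxx orbF subr_gt0.
apply: le_trans (lee_wpmul2l c0 (max_array_tail_le _ _ m0 j0)) _.
rewrite ge0_sume_distrr; last by move=> k _; apply: sume_ge0 => n _; exact: measure_ge0.
rewrite [leLHS]big_seq [leRHS]big_seq; apply: lee_sum => k; rewrite mem_index_iota => km.
rewrite ge0_sume_distrr; last by move=> n _; exact: measure_ge0.
rewrite [leLHS]big_seq [leRHS]big_seq; apply: lee_sum => n; rewrite mem_index_iota => nj.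
rewrite powRD ?EFinM; last by rewrite pnatr_eq0 muln_eq0 negb_or -!lt0n m0 j0 implybT.
by apply: lee_wpmul2l => //; apply: entry_tail_le.
Qed.

End theorem4.

Theorem theorem4 (R : realType) (d : measure_display) (T : measurableType d)
  (P : probability T R) (phi : R -> R) (X : nat -> nat -> {RV P >-> R})
  (g : R -> R) (f : R -> R) (alpha : R) :
  N_function phi ->
  (forall k n, (1 <= k)%N -> (1 <= n)%N -> phi_subgaussian P phi (X k n)) ->
  (forall x, 0 < g x) ->
  (forall x y, x <= y -> g x <= g y) ->
  (forall m j k n, (1 <= k <= m)%N -> (1 <= n <= j)%N ->
     g (ln (m * j)%:R) / tau_phi P phi (X k n) >= f ((m * j)%:R / (k * n)%:R)
     /\ f ((m * j)%:R / (k * n)%:R) >= 1) ->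
  (\sum_(1 <= m <oo) \sum_(1 <= j <oo)
     (\sum_(1 <= k < m.+1) \sum_(1 <= n < j.+1)
        ((m * j)%:R `^ (- alpha - f ((m * j)%:R / (k * n)%:R)))%:E) < +oo)%E ->
  let a := fun m j : nat => g (ln (m * j)%:R) * young_fenchel_inv phi (ln (m * j)%:R) in
  let Y := fun m j w => max_array (fun k n => (X k n : T -> R)) m j w - a m j in
  let Yplus := fun m j w => Num.max (Y m j w) 0 in
  (\sum_(1 <= m <oo) \sum_(1 <= j <oo)
     ((m * j)%:R `^ (- alpha))%:E * P [set w | (0 < Yplus m j w)%R] < +oo)%E.
Proof.
move=> phiN X_subgaussian _ _ gf series_finite /=.
apply: le_lt_trans series_finite; rewrite !ereal_series.
apply: lee_nneseries => m m1.
  by move=> _; apply: nneseries_ge0 => j _ _; rewrite mule_ge0 ?lee_fin ?powR_ge0.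
rewrite !ereal_series; apply: lee_nneseries => [j _ _|j j1].
  by rewrite mule_ge0 ?lee_fin ?powR_ge0.
exact: max_array_term_le.
Qed.
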